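(* Let $b\in\mathcal E_1$ with $b(t)=1+\phi(t)$, $\phi$ flat at $0$. Let $\theta$ be the inverse germ of $t\mapsto t\,b(t)$, write $\theta(x)=x\,c(x)$ (so $c\in\mathcal E_1$ and $c-1$ is flat at $0$), and set $\sigma(x)=\theta(x)^4$, $\sigma^0=\mathrm{id}$, $\sigma^n=\sigma\circ\sigma^{n-1}$. Then the infinite product $$\Big(\prod_{n=0}^{\infty}c(\sigma^n(x))^{1/4^n}\Big)^{1/2}$$ converges on a neighbourhood of $0$ and defines a $C^\infty$ function there.
   Context: $\mathcal E_1$ denotes the ring of smooth function germs at $0\in\mathbb R$. A function germ is flat at $0$ if all its derivatives (including its value) vanish at $0$. *)

From Stdlib Require Import Reals.
From Coquelicot Require Import Coquelicot.
Open Scope R_scope.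

Definition smooth_on_ball (f : R -> R) (r : R) : Prop :=
  forall (n : nat) (x : R), Rabs x < r -> ex_derive_n f n x.

Definition flat_at0 (f : R -> R) : Prop :=
  forall n : nat, Derive_n f n 0 = 0.

Definition sigma (theta : R -> R) (x : R) : R := (theta x) ^ 4.
Definition sigma_iter (theta : R -> R) (n : nat) (x : R) : R :=
  Nat.iter n (sigma theta) x.

Definition prod_factor (c theta : R -> R) (n : nat) (x : R) : R :=
  Rpower (c (sigma_iter theta n x)) (/ 4 ^ n).

Fixpoint partial_prod (f : nat -> R) (N : nat) : R :=
  match N with
  | O => 1
  | S m => partial_prod f m * f m
  end.

From Pilot Require Import Defs.
From Stdlib Require Import Reals Lra Lia.
From Coquelicot Require Import Coquelicot.
Open Scope R_scope.

(* Since theta(x) b(theta(x)) = x and b(0) = 1, continuity gives c(0) = 1.  Hence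
   sigma(x) = (x c(x))^4 satisfies sigma(0) = sigma'(0) = 0, so on a small ball
   |sigma'| <= 1, sigma maps the ball into itself and c stays positive along the
   orbits.  The square root of the product is then exp(V/2) with
   V(x) = sum_n 4^-n ln c(sigma^n(x)).  By the chain rule and |sigma'| <= 1, the
   j-th derivative of ln c o sigma^n is O(2^n) on a closed ball, so the series of
   j-th derivatives of V is dominated by a multiple of sum_n 2^-n and V is smooth. *)

Definition Cn_on (D : R -> Prop) (n : nat) (f : R -> R) : Prop :=
  forall m x, (m <= n)%nat -> D x -> ex_derive_n f m x.

Definition smooth_on (D : R -> Prop) (f : R -> R) : Prop :=
  forall n x, D x -> ex_derive_n f n x.

Lemma Derive_n_S_Derive (f : R -> R) n x : Derive_n f (S n) x = Derive_n (Derive f) n x.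
Proof. rewrite <- Nat.add_1_r, <- Derive_n_comp. reflexivity. Qed.

Lemma ex_derive_n_SS_Derive (f : R -> R) n x :
  ex_derive_n f (S (S n)) x <-> ex_derive_n (Derive f) (S n) x.
Proof.
split; apply ex_derive_ext; intro t; [|symmetry]; apply Derive_n_S_Derive.
Qed.

Lemma locally_Derive_eq (D : R -> Prop) (f f' : R -> R) x :
  open D -> D x -> (forall y, D y -> is_derive f y (f' y)) ->
  locally x (fun t => Derive f t = f' t).
Proof.
intros HD Hx Hf. apply (filter_imp D); [|now apply HD].
intros y Hy; now apply is_derive_unique, Hf.
Qed.

Lemma smooth_on_iff_Cn_on D f : smooth_on D f <-> forall n, Cn_on D n f.
Proof.
split.
- intros Hf n m x _ Hx; now apply Hf.
- intros Hf n x Hx; now apply (Hf n n x).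
Qed.

Lemma Cn_on0 D f : Cn_on D 0 f.
Proof. intros m x Hm _. replace m with 0%nat by lia. exact I. Qed.

Lemma Cn_onW D n f : Cn_on D (S n) f -> Cn_on D n f.
Proof. intros Hf m x Hm Hx; apply Hf; auto. Qed.

Lemma Cn_on_Derive D n f : Cn_on D (S n) f -> Cn_on D n (Derive f).
Proof.
intros Hf [|m] x Hm Hx; [exact I|].
apply (proj1 (ex_derive_n_SS_Derive f m x)), Hf; auto; lia.
Qed.

Lemma Cn_on_is_derive D n f x : Cn_on D (S n) f -> D x -> is_derive f x (Derive f x).
Proof. intros Hf Hx. apply Derive_correct, (Hf 1%nat); auto; lia. Qed.

Lemma smooth_on_is_derive D f x : smooth_on D f -> D x -> is_derive f x (Derive f x).
Proof. intros Hf Hx. apply Derive_correct, (Hf 1%nat x Hx). Qed.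

Lemma Cn_on_const D n a : Cn_on D n (fun _ => a).
Proof. intros m x _ _. apply ex_derive_n_const. Qed.

Section Cn_calculus.

Variable D : R -> Prop.
Hypothesis D_open : open D.

Lemma Cn_on_S n f f' : (forall x, D x -> is_derive f x (f' x)) ->
  Cn_on D n f' -> Cn_on D (S n) f.
Proof.
intros Hf Hf' [|[|m]] x Hm Hx.
- exact I.
- now exists (f' x); apply Hf.
- apply (proj2 (ex_derive_n_SS_Derive f m x)), ex_derive_n_ext_loc with f'.
  + apply (filter_imp (fun t => Derive f t = f' t)); [now intros|].
    now apply locally_Derive_eq with D.
  + apply Hf'; auto; lia.
Qed.

Lemma Cn_on_plus n f g : Cn_on D n f -> Cn_on D n g -> Cn_on D n (fun x => f x + g x).
Proof.
revert f g; induction n as [|n IHn]; intros f g Hf Hg; [apply Cn_on0|].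
apply Cn_on_S with (fun x => Derive f x + Derive g x).
- intros x Hx. apply (is_derive_plus f g); eapply Cn_on_is_derive; eauto.
- apply IHn; now apply Cn_on_Derive.
Qed.

Lemma Cn_on_mult n f g : Cn_on D n f -> Cn_on D n g -> Cn_on D n (fun x => f x * g x).
Proof.
revert f g; induction n as [|n IHn]; intros f g Hf Hg; [apply Cn_on0|].
apply Cn_on_S with (fun x => Derive f x * g x + f x * Derive g x).
- intros x Hx. apply (is_derive_mult f g); [eapply Cn_on_is_derive; eauto..|].
  intros; apply Rmult_comm.
- apply Cn_on_plus; apply IHn; auto using Cn_on_Derive, Cn_onW.
Qed.

Lemma Cn_on_comp (D' : R -> Prop) n f g : smooth_on D g -> (forall x, D x -> D' (g x)) ->
  Cn_on D' n f -> Cn_on D n (fun x => f (g x)).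
Proof.
intros Hg HgD. assert (Hg' : forall k, Cn_on D k g) by now apply smooth_on_iff_Cn_on.
revert f; induction n as [|n IHn]; intros f Hf; [apply Cn_on0|].
apply Cn_on_S with (fun x => Derive f (g x) * Derive g x).
- intros x Hx. rewrite Rmult_comm.
  apply (is_derive_comp f g); [apply (Cn_on_is_derive D' n)|apply (Cn_on_is_derive D 0)]; auto.
- apply Cn_on_mult; [apply IHn|]; now apply Cn_on_Derive.
Qed.

Lemma Cn_on_id n : Cn_on D n (fun x => x).
Proof.
destruct n; [apply Cn_on0|].
apply Cn_on_S with (fun _ => 1); [intros x _; exact (is_derive_id x)|apply Cn_on_const].
Qed.

Lemma smooth_on_mult f g : smooth_on D f -> smooth_on D g -> smooth_on D (fun x => f x * g x).
Proof. rewrite !smooth_on_iff_Cn_on; intros Hf Hg n; now apply Cn_on_mult. Qed.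

Lemma smooth_on_id : smooth_on D (fun x => x).
Proof. apply smooth_on_iff_Cn_on, Cn_on_id. Qed.

Lemma smooth_on_comp (D' : R -> Prop) f g : smooth_on D g -> (forall x, D x -> D' (g x)) ->
  smooth_on D' f -> smooth_on D (fun x => f (g x)).
Proof.
intros Hg HgD Hf. apply smooth_on_iff_Cn_on; intro n.
apply Cn_on_comp with D'; auto. now apply smooth_on_iff_Cn_on.
Qed.

End Cn_calculus.

Lemma smooth_on_Derive D f : smooth_on D f -> smooth_on D (Derive f).
Proof. rewrite !smooth_on_iff_Cn_on; intros Hf n; apply Cn_on_Derive, Hf. Qed.

Lemma smooth_on_ext D f g : (forall t, f t = g t) -> smooth_on D f -> smooth_on D g.
Proof. intros E Hf n x Hx. apply ex_derive_n_ext with f; auto. Qed.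

Lemma smooth_on_subset (D D' : R -> Prop) f : (forall x, D x -> D' x) ->
  smooth_on D' f -> smooth_on D f.
Proof. intros HD Hf n x Hx; now apply Hf, HD. Qed.

Lemma smooth_on_const D a : smooth_on D (fun _ => a).
Proof. intros n x _; apply ex_derive_n_const. Qed.

Lemma smooth_on_scal_l D a f : smooth_on D f -> smooth_on D (fun x => a * f x).
Proof. intros Hf n x Hx; now apply ex_derive_n_scal_l, Hf. Qed.

Lemma smooth_on_pow D p : smooth_on D (fun x => x ^ p).
Proof. intros n x _; apply ex_derive_n_pow. Qed.

Lemma smooth_on_exp : smooth_on (fun _ => True) exp.
Proof.
apply smooth_on_iff_Cn_on; intro n; induction n as [|n IHn]; [apply Cn_on0|].
apply Cn_on_S with exp; [apply open_true|intros; apply is_derive_exp|exact IHn].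
Qed.

Lemma smooth_on_inv : smooth_on (fun x => 0 < x) Rinv.
Proof.
apply smooth_on_iff_Cn_on; intro n; induction n as [|n IHn]; [apply Cn_on0|].
apply Cn_on_S with (fun x => -1 * (/ x * / x)); [apply open_gt| |].
- intros x Hx. replace (-1 * (/ x * / x)) with (- 1 / x ^ 2) by (field; lra).
  apply (is_derive_inv (fun y => y) x 1); [exact (is_derive_id x)|lra].
- apply Cn_on_mult; [apply open_gt|apply Cn_on_const|now apply Cn_on_mult; [apply open_gt|..]].
Qed.

Lemma smooth_on_ln : smooth_on (fun x => 0 < x) ln.
Proof.
apply smooth_on_iff_Cn_on; intros [|n]; [apply Cn_on0|].
apply Cn_on_S with Rinv; [apply open_gt|apply is_derive_ln|].
now apply smooth_on_iff_Cn_on, smooth_on_inv.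
Qed.

Notation ball0 r := (fun x : R => Rabs x < r).

Lemma open_ball0 r : open (ball0 r).
Proof.
intros x Hx. exists (mkposreal (r - Rabs x) ltac:(lra)). intros y Hy.
change (Rabs (y - x) < r - Rabs x) in Hy.
pose proof (Rabs_triang_inv y x). simpl in *. lra.
Qed.

Definition abs_bounded_on (rho : R) (f : R -> R) (M : R) : Prop :=
  forall y, Rabs y <= rho -> Rabs (f y) <= M.

Lemma Derive_n_bounded_on_closed_ball rho rho1 f j : 0 <= rho < rho1 ->
  smooth_on (ball0 rho1) f -> exists B, 0 <= B /\ abs_bounded_on rho (Derive_n f j) B.
Proof.
intros Hrho Hf.
destruct (continuity_ab_maj (fun y => Rabs (Derive_n f j y)) (-rho) rho) as [y0 [Hy0 _]];
  [lra| |].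
- intros y Hy. apply (continuity_pt_comp _ Rabs); [|apply Rcontinuity_abs].
  apply continuity_pt_filterlim, (ex_derive_continuous (Derive_n f j) y), (Hf (S j)).
  apply Rabs_le_between in Hy; lra.
- exists (Rabs (Derive_n f j y0)); split; [apply Rabs_pos|].
  intros y Hy; now apply Hy0, Rabs_le_between.
Qed.

Section Lipschitz_self_map.

Variables (rho rho1 : R) (s : R -> R).
Hypothesis rho_lt : 0 <= rho < rho1.
Hypothesis s_smooth : smooth_on (ball0 rho1) s.
Hypothesis s0 : s 0 = 0.
Hypothesis Derive_s_le1 : forall x, Rabs x < rho1 -> Rabs (Derive s x) <= 1.

Lemma abs_s_le x : Rabs x < rho1 -> Rabs (s x) <= Rabs x.
Proof.
intros Hx.
assert (Hseg : forall y, Rmin 0 x <= y <= Rmax 0 x -> Rabs y < rho1).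
{ intros y Hy. rewrite Rmin_comm, Rmax_comm in Hy.
  apply Rabs_le_between_min_max in Hy. rewrite !Rminus_0_r in Hy. lra. }
destruct (MVT_abs s (Derive s) 0 x) as [y [Hsy Hy]].
- intros y Hy. now apply is_derive_Reals, (smooth_on_is_derive (ball0 rho1)), Hseg.
- rewrite s0, !Rminus_0_r in Hsy. rewrite Hsy.
  pose proof (Derive_s_le1 y (Hseg y Hy)). pose proof (Rabs_pos x). nra.
Qed.

Lemma s_maps_ball x : Rabs x < rho1 -> Rabs (s x) < rho1.
Proof. intros Hx; pose proof (abs_s_le x Hx); lra. Qed.

Lemma s_maps_closed_ball x : Rabs x <= rho -> Rabs (s x) <= rho.
Proof. intros Hx; pose proof (abs_s_le x ltac:(lra)); lra. Qed.

Lemma Derive_n_S_comp_mul g w k x : smooth_on (ball0 rho1) g -> smooth_on (ball0 rho1) w ->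
  Rabs x < rho1 ->
  Derive_n (fun y => g (s y) * w y) (S k) x =
  Derive_n (fun y => Derive g (s y) * (Derive s y * w y)) k x +
  Derive_n (fun y => g (s y) * Derive w y) k x.
Proof.
intros Hg Hw Hx.
assert (HD := open_ball0 rho1).
assert (Hgs : smooth_on (ball0 rho1) (fun y => g (s y)))
  by (apply smooth_on_comp with (ball0 rho1); auto using s_maps_ball).
rewrite Derive_n_S_Derive.
rewrite (Derive_n_ext_loc _ (fun y => Derive g (s y) * (Derive s y * w y) + g (s y) * Derive w y)).
- assert (HQ1 : smooth_on (ball0 rho1) (fun y => Derive g (s y) * (Derive s y * w y))).
  { apply smooth_on_mult; auto.
    - apply smooth_on_comp with (ball0 rho1); auto using s_maps_ball, smooth_on_Derive.
    - apply smooth_on_mult; auto using smooth_on_Derive. }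
  assert (HQ2 : smooth_on (ball0 rho1) (fun y => g (s y) * Derive w y))
    by (apply smooth_on_mult; auto using smooth_on_Derive).
  apply Derive_n_plus; apply (filter_imp (ball0 rho1)); try now apply HD.
  + intros y Hy m _; now apply HQ1.
  + intros y Hy m _; now apply HQ2.
- apply locally_Derive_eq with (ball0 rho1); auto. intros y Hy.
  assert (Hgs' : is_derive (fun t => g (s t)) y (Derive g (s y) * Derive s y)).
  { rewrite Rmult_comm. apply (is_derive_comp g s); apply (smooth_on_is_derive (ball0 rho1));
      auto using s_maps_ball. }
  replace (Derive g (s y) * (Derive s y * w y) + g (s y) * Derive w y)
    with (Derive g (s y) * Derive s y * w y + g (s y) * Derive w y) by ring.
  apply (is_derive_mult (fun t => g (s t)) w); auto.
  + now apply (smooth_on_is_derive (ball0 rho1)).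
  + intros; apply Rmult_comm.
Qed.

Lemma Derive_n_comp_mul_bound k : forall w W, smooth_on (ball0 rho1) w ->
  abs_bounded_on rho w W ->
  exists C, 0 <= C /\ forall g A B, smooth_on (ball0 rho1) g ->
    abs_bounded_on rho (Derive_n g k) A ->
    (forall j, (j < k)%nat -> abs_bounded_on rho (Derive_n g j) B) ->
    abs_bounded_on rho (Derive_n (fun y => g (s y) * w y) k) (W * A + C * B).
Proof.
induction k as [|k IHk]; intros w W Hw HwW.
- exists 0; split; [lra|]. intros g A B _ HA _ x Hx. simpl.
  rewrite Rabs_mult. pose proof (HA (s x) (s_maps_closed_ball x Hx)). pose proof (HwW x Hx).
  pose proof (Rabs_pos (g (s x))). pose proof (Rabs_pos (w x)). simpl in *. nra.
- destruct (IHk (fun y => Derive s y * w y) W) as [C1 [HC1 Hk1]].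
  { apply smooth_on_mult; auto using smooth_on_Derive, open_ball0. }
  { intros y Hy. rewrite Rabs_mult. pose proof (Derive_s_le1 y ltac:(lra)). pose proof (HwW y Hy).
    pose proof (Rabs_pos (Derive s y)). pose proof (Rabs_pos (w y)). nra. }
  destruct (Derive_n_bounded_on_closed_ball rho rho1 w 1 rho_lt Hw) as [W2 [HW2 Hw'W2]].
  destruct (IHk (Derive w) W2) as [C2 [HC2 Hk2]]; auto using smooth_on_Derive.
  exists (C1 + W2 + C2); split; [lra|]. intros g A B Hg HA HB x Hx.
  rewrite Derive_n_S_comp_mul by (auto; lra).
  assert (E1 := Hk1 (Derive g) A B (smooth_on_Derive _ _ Hg)).
  assert (E2 := Hk2 g B B Hg).
  pose proof (Rabs_triang (Derive_n (fun y => Derive g (s y) * (Derive s y * w y)) k x)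
    (Derive_n (fun y => g (s y) * Derive w y) k x)).
  assert (F1 : Rabs (Derive_n (fun y => Derive g (s y) * (Derive s y * w y)) k x)
                 <= W * A + C1 * B).
  { apply E1; auto.
    - intros y Hy; rewrite <- Derive_n_S_Derive; auto.
    - intros j Hj y Hy; rewrite <- Derive_n_S_Derive; apply HB; auto; lia. }
  assert (F2 : Rabs (Derive_n (fun y => g (s y) * Derive w y) k x) <= W2 * B + C2 * B).
  { apply E2; [apply HB; lia| intros j Hj; apply HB; lia|exact Hx]. }
  lra.
Qed.

Lemma iter_maps_ball n x : Rabs x < rho1 -> Rabs (Nat.iter n s x) < rho1.
Proof. induction n; simpl; auto using s_maps_ball. Qed.

Lemma smooth_on_comp_iter h n : smooth_on (ball0 rho1) h ->
  smooth_on (ball0 rho1) (fun x => h (Nat.iter n s x)).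
Proof.
intros Hh. apply smooth_on_comp with (ball0 rho1); auto using iter_maps_ball, open_ball0.
induction n as [|n IHn]; [apply smooth_on_id, open_ball0|].
change (smooth_on (ball0 rho1) (fun x => s (Nat.iter n s x))).
apply smooth_on_comp with (ball0 rho1); auto using iter_maps_ball, open_ball0.
Qed.

Section Iterates.

Variable h : R -> R.
Hypothesis h_smooth : smooth_on (ball0 rho1) h.

(* D^j(h o s^(n+1)) is bounded by sup |D^j(h o s^n)| (as |s'| <= 1) plus C times the
   O(2^n) lower derivatives, so a bound K' 2^n propagates from n to n + 1. *)
Lemma Derive_n_comp_iter_top_bound j K : 0 <= K ->
  (forall i n, (i < j)%nat ->
     abs_bounded_on rho (Derive_n (fun x => h (Nat.iter n s x)) i) (K * 2 ^ n)) ->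
  exists K', 0 <= K' /\
    forall n, abs_bounded_on rho (Derive_n (fun x => h (Nat.iter n s x)) j) (K' * 2 ^ n).
Proof.
intros HK Hlow.
destruct (Derive_n_comp_mul_bound j (fun _ => 1) 1) as [C [HC Hcomp]].
{ apply smooth_on_const. }
{ intros y _. rewrite Rabs_R1. lra. }
destruct (Derive_n_bounded_on_closed_ball rho rho1 h j rho_lt h_smooth) as [B [HB HhB]].
assert (HCK : 0 <= C * K) by now apply Rmult_le_pos.
exists (B + C * K); split; [lra|].
induction n as [|n IHn]; intros x Hx.
- change (Rabs (Derive_n h j x) <= (B + C * K) * 1). pose proof (HhB x Hx). lra.
- rewrite (Derive_n_ext _ (fun y => h (Nat.iter n s (s y)) * 1))
    by (intro t; rewrite Nat.iter_succ_r; ring).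
  assert (Hstep := Hcomp (fun y => h (Nat.iter n s y)) ((B + C * K) * 2 ^ n) (K * 2 ^ n)
    (smooth_on_comp_iter h n h_smooth) IHn (fun i Hi => Hlow i n Hi) x Hx).
  pose proof (pow_le 2 n ltac:(lra)).
  assert (C * (K * 2 ^ n) <= (B + C * K) * 2 ^ n) by nra.
  simpl pow. lra.
Qed.

Lemma Derive_n_comp_iter_bound j : exists K, 0 <= K /\
  forall i n, (i <= j)%nat ->
    abs_bounded_on rho (Derive_n (fun x => h (Nat.iter n s x)) i) (K * 2 ^ n).
Proof.
induction j as [|j [K [HK Hle]]].
- destruct (Derive_n_comp_iter_top_bound 0 0) as [K [HK Htop]]; [lra|intros; lia|].
  exists K; split; auto. intros i n Hi; replace i with 0%nat by lia. apply Htop.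
- destruct (Derive_n_comp_iter_top_bound (S j) K HK) as [K' [HK' Htop]].
  { intros i n Hi; apply Hle; lia. }
  exists (K + K'); split; [lra|]. intros i n Hi x Hx.
  pose proof (pow_le 2 n ltac:(lra)).
  destruct (Nat.eq_dec i (S j)) as [->|Hne].
  + pose proof (Htop n x Hx). nra.
  + pose proof (Hle i n ltac:(lia) x Hx). nra.
Qed.

Lemma iter_series_majorant j : exists A : nat -> R, ex_series A /\
  forall n x, Rabs x < rho -> Rabs (Derive_n (fun x => / 4 ^ n * h (Nat.iter n s x)) j x) <= A n.
Proof.
destruct (Derive_n_comp_iter_bound j) as [K [HK HhK]].
exists (fun n => K * (/ 2) ^ n). split.
- apply (ex_series_scal_l K (fun n => (/ 2) ^ n)), ex_series_geom.
  rewrite Rabs_pos_eq; lra.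
- intros n x Hx. rewrite Derive_n_scal_l, Rabs_mult.
  rewrite Rabs_pos_eq by (apply Rlt_le, Rinv_0_lt_compat, pow_lt; lra).
  replace (K * (/ 2) ^ n) with (/ 4 ^ n * (K * 2 ^ n)).
  + apply Rmult_le_compat_l; [apply Rlt_le, Rinv_0_lt_compat, pow_lt; lra|].
    apply (HhK j n (le_n j) x); lra.
  + rewrite pow_inv. replace 4 with (2 * 2) by ring. rewrite Rpow_mult_distr.
    field. apply pow_nonzero; lra.
Qed.

End Iterates.

End Lipschitz_self_map.

Lemma CVU_shrink fn f x (r r' : posreal) : r' <= r -> CVU fn f x r -> CVU fn f x r'.
Proof.
intros Hr Hfn eps Heps. destruct (Hfn eps Heps) as [N HN].
exists N; intros n y Hn Hy; apply HN; auto. unfold Boule in *; lra.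
Qed.

Lemma is_derive_sum_f_R0 (v dv : nat -> R -> R) y N :
  (forall n, is_derive (v n) y (dv n y)) ->
  is_derive (fun x => sum_f_R0 (fun n => v n x) N) y (sum_f_R0 (fun n => dv n y) N).
Proof.
intros Hv; induction N as [|N IHN]; simpl; auto.
now apply (is_derive_plus (fun x => sum_f_R0 (fun n => v n x) N) (v (S N))).
Qed.

Section Smooth_series.

Variables (rho : R) (u : nat -> R -> R).
Hypothesis u_smooth : forall n, smooth_on (ball0 rho) (u n).
Hypothesis Derive_n_u_summable : forall j, exists A : nat -> R, ex_series A /\
  forall n x, Rabs x < rho -> Rabs (Derive_n (u n) j x) <= A n.

Lemma ex_series_Derive_n j x : Rabs x < rho -> ex_series (fun n => Derive_n (u n) j x).
Proof.
intros Hx. destruct (Derive_n_u_summable j) as [A [HA HuA]].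
apply (ex_series_le (V := R_CompleteNormedModule) _ A); auto.
Qed.

Let Vj (j : nat) (x : R) : R := Series (fun n => Derive_n (u n) j x).

Lemma is_derive_Series_Derive_n j x : Rabs x < rho -> is_derive (Vj j) x (Vj (S j) x).
Proof.
intros Hx. assert (Hrho : 0 < rho) by (pose proof (Rabs_pos x); lra).
destruct (Derive_n_u_summable (S j)) as [A [HA HuA]].
assert (HA0 : forall n, Rabs (A n) = A n).
{ intro n. apply Rabs_pos_eq.
  pose proof (HuA n x Hx). pose proof (Rabs_pos (Derive_n (u n) (S j) x)). lra. }
destruct (CVN_CVU_r (fun n => Derive_n (u n) (S j)) (mkposreal rho Hrho)) with x as [e He].
- exists A, (Series A). split.
  + apply (Un_cv_ext (sum_f_R0 A)); [intro N; apply sum_eq; auto|].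
    now apply is_series_Reals, Series_correct.
  + intros n y Hy; apply HuA. unfold Boule in Hy; rewrite Rminus_0_r in Hy; exact Hy.
- exact Hx.
- (* Uniform convergence holds on some ball around x; shrink it to stay inside ball0 rho. *)
  set (e' := mkposreal (Rmin e (rho - Rabs x)) ltac:(apply Rmin_pos; [apply cond_pos|lra])).
  assert (Hball : forall y, Boule x e' y -> Rabs y < rho).
  { intros y Hy. unfold Boule in Hy. pose proof (Rmin_r e (rho - Rabs x)).
    pose proof (Rabs_triang_inv y x). simpl in Hy. lra. }
  apply is_derive_Reals.
  apply (CVU_derivable (fun N y => sum_f_R0 (fun n => Derive_n (u n) j y) N)
                       (fun N y => sum_f_R0 (fun n => Derive_n (u n) (S j) y) N) _ _ x e').
  + apply CVU_shrink with e; [apply Rmin_l|exact He].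
  + intros y Hy. apply is_series_Reals, Series_correct, ex_series_Derive_n, Hball, Hy.
  + intros N y Hy. apply is_derive_Reals.
    apply (is_derive_sum_f_R0 (fun n => Derive_n (u n) j) (fun n => Derive_n (u n) (S j))).
    intro n. apply Derive_correct, (u_smooth n (S j)), Hball, Hy.
  + unfold Boule; rewrite Rminus_eq_0, Rabs_R0; apply cond_pos.
Qed.

Lemma smooth_on_Series : smooth_on (ball0 rho) (fun x => Series (fun n => u n x)).
Proof.
assert (HV : forall j x, Rabs x < rho -> Derive_n (fun x => Series (fun n => u n x)) j x = Vj j x).
{ induction j as [|j IHj]; intros x Hx; [reflexivity|].
  simpl. rewrite (Derive_ext_loc _ (Vj j)).
  - now apply is_derive_unique, is_derive_Series_Derive_n.
  - apply (filter_imp (ball0 rho)); [exact IHj|now apply open_ball0]. }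
intros [|j] x Hx; [exact I|].
apply ex_derive_ext_loc with (Vj j).
- apply (filter_imp (ball0 rho)); [|now apply open_ball0].
  intros y Hy; symmetry; now apply HV.
- exists (Vj (S j) x); now apply is_derive_Series_Derive_n.
Qed.

End Smooth_series.

Lemma smooth_on_continuous D f x : smooth_on D f -> D x -> continuous f x.
Proof. intros Hf Hx. apply (ex_derive_continuous f x), (Hf 1%nat x Hx). Qed.

Lemma continuous_eq_near_punctured (k : R -> R) x0 a : continuous k x0 ->
  locally x0 (fun x => x <> x0 -> k x = a) -> k x0 = a.
Proof.
intros Hk Ha.
assert (L1 : is_lim k x0 (k x0)) by now apply is_lim_continuity, continuity_pt_filterlim.
assert (L2 : is_lim k x0 a).
{ apply is_lim_ext_loc with (fun _ => a); [|apply is_lim_const].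
  change (locally x0 (fun x => x <> x0 -> a = k x)).
  revert Ha; apply filter_imp. intros x Hx Hne; symmetry; auto. }
apply is_lim_unique in L1; apply is_lim_unique in L2.
rewrite L1 in L2; now injection L2.
Qed.

Lemma c0_of_inverse (b c theta : R -> R) r0 : 0 < r0 ->
  smooth_on (ball0 r0) b -> b 0 = 1 -> smooth_on (ball0 r0) c ->
  (forall x, Rabs x < r0 -> theta x * b (theta x) = x) ->
  (forall x, Rabs x < r0 -> theta x = x * c x) -> c 0 = 1.
Proof.
intros Hr0 Hb Hb0 Hc Hinv Htheta.
assert (H00 : Rabs 0 < r0) by (rewrite Rabs_R0; lra).
assert (Hk : continuous (fun x => c x * b (x * c x)) 0).
{ apply (continuous_mult c (fun x => b (x * c x))).
  { now apply smooth_on_continuous with (ball0 r0). }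
  apply continuous_comp.
  - apply (continuous_mult (fun x => x) c); [apply continuous_id|].
    now apply smooth_on_continuous with (ball0 r0).
  - apply smooth_on_continuous with (ball0 r0); auto. rewrite Rmult_0_l; exact H00. }
assert (Hk1 : c 0 * b (0 * c 0) = 1).
{ apply (continuous_eq_near_punctured (fun x => c x * b (x * c x))); [exact Hk|].
  apply (filter_imp (ball0 r0)); [|now apply open_ball0].
  intros x Hx Hx0. apply Rmult_eq_reg_l with x; [|exact Hx0].
  rewrite <- Rmult_assoc, <- Htheta, Hinv by exact Hx. ring. }
now rewrite Rmult_0_l, Hb0, Rmult_1_r in Hk1.
Qed.

Lemma partial_prod_exp (f a : nat -> R) : (forall n, f n = exp (a n)) ->
  forall N, partial_prod f (S N) = exp (sum_f_R0 a N).
Proof.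
intros Hfa N; induction N as [|N IHN]; simpl in *.
- rewrite Hfa. ring.
- rewrite IHN, Hfa, exp_plus. reflexivity.
Qed.

Section Infinite_product.

Variables (c theta : R -> R) (r0 : R).
Hypothesis r0_pos : 0 < r0.
Hypothesis c_smooth : smooth_on (ball0 r0) c.
Hypothesis c0 : c 0 = 1.
Hypothesis theta_eq : forall x, Rabs x < r0 -> theta x = x * c x.

Let s (x : R) : R := (x * c x) ^ 4.

Lemma s_smooth : smooth_on (ball0 r0) s.
Proof.
apply (smooth_on_comp _ (open_ball0 r0) (fun _ => True) (fun y => y ^ 4) (fun x => x * c x));
  auto using smooth_on_pow.
apply smooth_on_mult; auto using open_ball0, smooth_on_id.
Qed.

Lemma Derive_s_0 : Derive s 0 = 0.
Proof.
apply is_derive_unique.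
replace 0 with (INR 4 * (1 * c 0 + 0 * Derive c 0) * (0 * c 0) ^ pred 4) at 2 by (simpl; ring).
apply (is_derive_pow (fun x => x * c x)), (is_derive_mult (fun x => x) c).
- exact (is_derive_id 0).
- apply (smooth_on_is_derive (ball0 r0)); auto. rewrite Rabs_R0; lra.
- intros; apply Rmult_comm.
Qed.

Lemma exists_ball_c_pos_Derive_s_le1 : exists rho1, 0 < rho1 /\
  forall x, Rabs x < rho1 -> Rabs x < r0 /\ 0 < c x /\ Rabs (Derive s x) <= 1.
Proof.
assert (H00 : Rabs 0 < r0) by (rewrite Rabs_R0; lra).
assert (Lc := proj1 (continuity_pt_locally c 0)
  (proj2 (continuity_pt_filterlim c 0) (smooth_on_continuous _ _ _ c_smooth H00))
  (mkposreal 1 Rlt_0_1)).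
assert (Ls := proj1 (continuity_pt_locally (Derive s) 0)
  (proj2 (continuity_pt_filterlim _ 0)
    (smooth_on_continuous _ _ _ (smooth_on_Derive _ _ s_smooth) H00))
  (mkposreal 1 Rlt_0_1)).
destruct (filter_and _ _ (open_ball0 r0 0 H00) (filter_and _ _ Lc Ls)) as [e He].
exists e; split; [apply cond_pos|]. intros x Hx.
destruct (He x) as [Hxr0 [Hcx Hsx]]; [change (Rabs (x - 0) < e); now rewrite Rminus_0_r|].
simpl in Hcx, Hsx. rewrite c0 in Hcx. rewrite Derive_s_0, Rminus_0_r in Hsx.
apply Rabs_def2 in Hcx. repeat split; auto; lra.
Qed.

Lemma sigma_iter_eq rho1 : (forall x, Rabs x < rho1 -> Rabs x < r0) ->
  (forall n x, Rabs x < rho1 -> Rabs (Nat.iter n s x) < rho1) ->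
  forall n x, Rabs x < rho1 -> sigma_iter theta n x = Nat.iter n s x.
Proof.
intros Hr0 Hiter n x Hx; induction n as [|n IHn]; [reflexivity|].
unfold sigma_iter in *; simpl. rewrite IHn. unfold Defs.sigma.
now rewrite theta_eq by auto.
Qed.

Theorem sqrt_infinite_product_smooth : exists r : R, 0 < r /\
  exists F : R -> R,
    (forall x, Rabs x < r ->
       is_lim_seq (fun N => partial_prod (fun n => prod_factor c theta n x) N) (Finite (F x))
       /\ 0 < F x)
    /\ smooth_on_ball (fun x => Rpower (F x) (/ 2)) r.
Proof.
destruct exists_ball_c_pos_Derive_s_le1 as [rho1 [Hrho1 Hball]].
assert (Hrho : 0 <= rho1 / 2 < rho1) by lra.
assert (Hs : smooth_on (ball0 rho1) s).
{ apply smooth_on_subset with (ball0 r0); [apply Hball|apply s_smooth]. }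
assert (Hs0 : s 0 = 0) by (unfold s; ring).
assert (Hs' : forall x, Rabs x < rho1 -> Rabs (Derive s x) <= 1) by apply Hball.
assert (Hh : smooth_on (ball0 rho1) (fun y => ln (c y))).
{ apply (smooth_on_comp _ (open_ball0 _) (fun y => 0 < y)); [|apply Hball|exact smooth_on_ln].
  apply smooth_on_subset with (ball0 r0); [apply Hball|exact c_smooth]. }
set (u := fun n x => / 4 ^ n * ln (c (Nat.iter n s x))).
assert (Hu := iter_series_majorant (rho1 / 2) rho1 s Hrho Hs Hs0 Hs' (fun y => ln (c y)) Hh).
exists (rho1 / 2); split; [lra|].
exists (fun x => exp (Series (fun n => u n x))). split.
- intros x Hx. split; [|apply exp_pos].
  apply is_lim_seq_incr_1, is_lim_seq_ext with (fun N => exp (sum_f_R0 (fun n => u n x) N)).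
  { intro N. symmetry. apply partial_prod_exp. intro n. unfold prod_factor, Rpower, u.
    rewrite (sigma_iter_eq rho1); [reflexivity|apply Hball| |lra].
    apply (iter_maps_ball rho1 s Hs Hs0 Hs'). }
  apply is_lim_seq_continuous; [apply derivable_continuous_pt, derivable_pt_exp|].
  apply is_lim_seq_Reals, is_series_Reals, Series_correct, (ex_series_Derive_n _ u Hu 0), Hx.
- apply smooth_on_ext with (fun x => exp (/ 2 * Series (fun n => u n x))).
  { intro t. unfold Rpower. now rewrite ln_exp. }
  apply (smooth_on_comp _ (open_ball0 _) (fun _ => True)); [|easy|exact smooth_on_exp].
  apply smooth_on_scal_l, (smooth_on_Series _ u); [intro n|exact Hu].
  apply smooth_on_subset with (ball0 rho1); [intros; lra|].
  apply smooth_on_scal_l, (smooth_on_comp_iter rho1 s Hs Hs0 Hs' _ n Hh).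
Qed.

End Infinite_product.

Theorem proposition3p8 (b theta c : R -> R) (r0 : R) (Hr0 : 0 < r0)
  (* b is a smooth germ at 0 with b = 1 + phi, phi flat at 0 *)
  (Hb : smooth_on_ball b r0)
  (Hflat : flat_at0 (fun t => b t - 1))
  (* theta is the inverse germ of t |-> t b(t) *)
  (Hinv1 : forall t, Rabs t < r0 -> theta (t * b t) = t)
  (Hinv2 : forall x, Rabs x < r0 -> theta x * b (theta x) = x)
  (* theta(x) = x c(x) with c a smooth germ *)
  (Hc : smooth_on_ball c r0)
  (Htheta : forall x, Rabs x < r0 -> theta x = x * c x) :
  exists r : R, 0 < r /\
  exists F : R -> R,
    (forall x, Rabs x < r ->
       is_lim_seq (fun N => partial_prod (fun n => prod_factor c theta n x) N)
                  (Finite (F x))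
       /\ 0 < F x)
    /\ smooth_on_ball (fun x => Rpower (F x) (/ 2)) r.
Proof.
assert (Hb0 : b 0 = 1) by (specialize (Hflat 0%nat); simpl in Hflat; lra).
apply sqrt_infinite_product_smooth with r0; auto.
now apply c0_of_inverse with b theta r0.
Qed.
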